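(* Fix $y\in\mathcal Y$, $g\in\mathcal G$ and $x\in\mathcal X$. Restrict attention to the individuals $i\in\mathcal I(xg)$, and assume the matrix $\hat{\mathbf P}=(\hat P_{ir})_{i\in\mathcal I(xg),r\in\mathcal R}$ has full column rank $|\mathcal R|$. Then the following two statements are equivalent. 1. The within-cell weighting estimator and the within-cell OLS estimator coincide: $\hat\mu^{(\mathrm{wtd})}(y\mid r)=\hat\mu^{(\mathrm{ols})}(y\mid r)$ for all $r\in\mathcal R$. 2. For every pair of distinct $j,k\in\mathcal R$, at least one of the following holds: - the probabilities perfectly discriminate between $j$ and $k$, i.e. for every $i\in\mathcal I(xg)$, $\hat P_{ij}>0$ implies $\hat P_{ik}=0$ (equivalently $\sum_{i\in\mathcal I(xg)}\hat P_{ij}\hat P_{ik}=0$); - $\hat\mu^{(\mathrm{wtd})}(y\mid j)=\hat\mu^{(\mathrm{wtd})}(y\mid k)$.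
   Context: There are observations $i$ with outcomes $Y_i\in\mathcal Y$ (a finite set), locations $G_i\in\mathcal G$ and covariates $X_i\in\mathcal X$. Each individual has a vector of race probabilities $(\hat P_{ir})_{r\in\mathcal R}$ (e.g., BISG probabilities) with $\hat P_{ir}\ge0$ and $\sum_{r}\hat P_{ir}=1$. Let $\mathcal I(xg)=\{i:X_i=x,G_i=g\}$ and let $\mathbf 1_y$ be the vector $(\mathbb 1\{Y_i=y\})_{i\in\mathcal I(xg)}$. Within the cell, the weighting estimator is $$\hat\mu^{(\mathrm{wtd})}(y\mid r)=\frac{\sum_{i\in\mathcal I(xg)}\mathbb 1\{Y_i=y\}\hat P_{ir}}{\sum_{i\in\mathcal I(xg)}\hat P_{ir}},$$ and the OLS estimator is the vector $$\hat{\boldsymbol\mu}^{(\mathrm{ols})}(y\mid\cdot)=(\hat{\mathbf P}^\top\hat{\mathbf P})^{-1}\hat{\mathbf P}^\top\mathbf 1_y\in\mathbb R^{\mathcal R}.$$ *)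

From mathcomp Require Import all_boot all_order all_algebra.
Set Implicit Arguments. Unset Strict Implicit. Unset Printing Implicit Defensive.
Import Order.TTheory GRing.Theory Num.Theory.
Local Open Scope ring_scope.

(* Population of individuals [I] (finite), races ['I_m], outcomes/locations/
   covariates in arbitrary eqTypes.  [P i r] is the race probability. *)

Definition cell (I : finType) (Gt Xt : eqType) (G : I -> Gt) (X : I -> Xt)
  (x : Xt) (g : Gt) : {set I} := [set i | (X i == x) && (G i == g)].

Definition Pcell (F : realFieldType) (I : finType) (Gt Xt : eqType)
  (G : I -> Gt) (X : I -> Xt) (x : Xt) (g : Gt) (m : nat)
  (P : I -> 'I_m -> F) : 'M[F]_(#|cell G X x g|, m) :=
  \matrix_(a < #|cell G X x g|, r < m) P (enum_val a) r.

Definition onecell (F : realFieldType) (I : finType) (Yt Gt Xt : eqType)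
  (Y : I -> Yt) (G : I -> Gt) (X : I -> Xt) (x : Xt) (g : Gt) (y : Yt)
  : 'cV[F]_(#|cell G X x g|) :=
  \col_(a < #|cell G X x g|) ((Y (enum_val a) == y)%:R).

Definition mu_wtd (F : realFieldType) (I : finType) (Yt Gt Xt : eqType)
  (Y : I -> Yt) (G : I -> Gt) (X : I -> Xt) (m : nat) (P : I -> 'I_m -> F)
  (x : Xt) (g : Gt) (y : Yt) (r : 'I_m) : F :=
  (\sum_(i in cell G X x g) (Y i == y)%:R * P i r) /
  (\sum_(i in cell G X x g) P i r).

Definition mu_ols (F : realFieldType) (I : finType) (Yt Gt Xt : eqType)
  (Y : I -> Yt) (G : I -> Gt) (X : I -> Xt) (m : nat) (P : I -> 'I_m -> F)
  (x : Xt) (g : Gt) (y : Yt) : 'cV[F]_m :=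
  let Ph := Pcell G X x g P in
  invmx (Ph^T *m Ph) *m Ph^T *m onecell F Y G X x g y.

From mathcomp Require Import all_boot all_order all_algebra.
From mathcomp Require Import ring.
Import Order.TTheory GRing.Theory Num.Theory.
Local Open Scope ring_scope.

(* Let M be the n x m matrix of race probabilities in the cell (nonnegative
   entries, rows summing to 1, full column rank), o the 0/1 outcome column,
   A = M^T M its Gram matrix and w r = (M^T o)_r / (column sum r) the
   weighting estimator.  Since the rows of M sum to 1, the column sum r is
   the row sum r of A, hence the residual of the normal equations at w is
      (A w - M^T o)_r = \sum_k A r k (w k - w r),
   a graph-Laplacian of w for the nonnegative symmetric weights A.  As A is
   invertible, OLS = w iff this Laplacian vanishes.  A Laplacian with
   nonnegative symmetric weights vanishes iff w is constant across every
   edge (its energy \sum A r k (w k - w r)^2 equals -2 <w, Lw>).  Finally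
   A j k = \sum_a M a j M a k vanishes iff the probabilities discriminate
   j from k. *)

Definition gram {F : ringType} {n m : nat} (M : 'M[F]_(n, m)) : 'M[F]_m := M^T *m M.

Lemma gramE {F : comRingType} {n m : nat} (M : 'M[F]_(n, m)) j k :
  gram M j k = \sum_a M a j * M a k.
Proof. by rewrite !mxE; apply: eq_bigr => a _; rewrite mxE. Qed.

Section GraphLaplacian.
Variables (F : realFieldType) (m : nat) (A : 'M[F]_m) (w : 'I_m -> F).
Hypothesis A_sym : forall r k, A r k = A k r.
Hypothesis A_ge0 : forall r k, 0 <= A r k.

Let lap r := \sum_k A r k * (w k - w r).

Lemma laplacian_energy :
  \sum_r \sum_k A r k * (w k - w r) ^+ 2 =
    - (\sum_r w r * lap r + \sum_r w r * lap r).
Proof.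
have swap : \sum_r w r * lap r = - \sum_r \sum_k A r k * w k * (w k - w r).
  rewrite exchange_big -sumrN; apply: eq_bigr => r _.
  rewrite /lap mulr_sumr -sumrN; apply: eq_bigr => k _.
  by rewrite A_sym; ring.
rewrite {1}swap opprD opprK -sumrB; apply: eq_bigr => r _.
rewrite /lap mulr_sumr -sumrB; apply: eq_bigr => k _; ring.
Qed.

Lemma laplacian_eq0P :
  (forall r, lap r = 0) <-> (forall j k, j != k -> A j k = 0 \/ w j = w k).
Proof.
split=> [lap0 j k _ | edge r]; last first.
  rewrite /lap big1 // => k _; case: (eqVneq r k) => [->|rk].
    by rewrite subrr mulr0.
  by have [->|->] := edge r k rk; rewrite ?mul0r ?subrr ?mulr0.
have term_ge0 r s : 0 <= A r s * (w s - w r) ^+ 2.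
  by rewrite mulr_ge0 ?sqr_ge0.
have row_ge0 r : 0 <= \sum_s A r s * (w s - w r) ^+ 2.
  by rewrite sumr_ge0.
have energy0 : \sum_r \sum_s A r s * (w s - w r) ^+ 2 = 0.
  by rewrite laplacian_energy big1 ?addr0 ?oppr0 // => r _; rewrite lap0 mulr0.
have row0 := psumr_eq0P (fun r _ => row_ge0 r) energy0 (i := j) isT.
have /eqP := psumr_eq0P (fun s _ => term_ge0 j s) row0 (i := k) isT.
rewrite mulf_eq0 sqrf_eq0 subr_eq0 => /orP[/eqP|/eqP]; by [left | right].
Qed.

End GraphLaplacian.

Lemma row_sqnorm_eq0 (F : realFieldType) n (u : 'rV[F]_n) :
  u *m u^T = 0 -> u = 0.
Proof.
move=> /matrixP /(_ 0 0); rewrite !mxE => sq0.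
have sq_ge0 a : 0 <= u 0 a * u^T a 0 by rewrite mxE -expr2 sqr_ge0.
apply/matrixP => i a; rewrite (ord1 i) mxE.
have /eqP := psumr_eq0P (fun a _ => sq_ge0 a) sq0 (i := a) isT.
by rewrite mxE mulf_eq0 orbb => /eqP.
Qed.

Section Regression.
Variables (F : realFieldType) (n m : nat) (M : 'M[F]_(n, m)) (o : 'cV[F]_n).
Hypothesis M_ge0 : forall a r, 0 <= M a r.
Hypothesis M_rows1 : forall a, \sum_r M a r = 1.
Hypothesis M_rank : \rank M = m.

Let MT_free : row_free M^T.
Proof. by rewrite /row_free mxrank_tr M_rank. Qed.

Lemma gram_unit : gram M \in unitmx.
Proof.
rewrite -row_free_unit; apply: inj_row_free => v vA0.
apply/eqP; rewrite -(mulmx_free_eq0 _ MT_free); apply/eqP/row_sqnorm_eq0.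
by rewrite trmx_mul trmxK mulmxA -(mulmxA v) vA0 mul0mx.
Qed.

(* No column of M vanishes, so every weighting denominator is nonzero. *)
Lemma colsum_neq0 r : \sum_a M a r != 0.
Proof.
apply/negP => /eqP col0.
have Mr0 := psumr_eq0P (fun a _ => M_ge0 a r) col0.
have : (delta_mx 0 r : 'rV_m) *m M^T == 0.
  by rewrite -rowE; apply/eqP/matrixP => i a; rewrite !mxE Mr0.
rewrite (mulmx_free_eq0 _ MT_free) => /eqP /matrixP /(_ 0 r) /eqP.
by rewrite !mxE !eqxx oner_eq0.
Qed.

(* Rows summing to 1 turn column sums of M into row sums of its Gram matrix. *)
Lemma colsum_gram r : \sum_a M a r = \sum_k gram M r k.
Proof.
under [RHS]eq_bigr do rewrite gramE.
by rewrite exchange_big; apply: eq_bigr => a _; rewrite -mulr_sumr M_rows1 mulr1.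
Qed.

Definition wtd r := (\sum_a o a 0 * M a r) / (\sum_a M a r).

Lemma normal_residual r :
  (gram M *m \col_k wtd k) r 0 - (M^T *m o) r 0
    = \sum_k gram M r k * (wtd k - wtd r).
Proof.
have MTo : (M^T *m o) r 0 = wtd r * \sum_a M a r.
  rewrite /wtd divfK ?colsum_neq0 // mxE.
  by apply: eq_bigr => a _; rewrite mxE mulrC.
rewrite MTo colsum_gram mulr_sumr mxE -sumrB; apply: eq_bigr => k _.
by rewrite [(\col_k0 _) _ _]mxE; ring.
Qed.

Lemma ols_eq_wtdP :
  (forall r, wtd r = (invmx (gram M) *m M^T *m o) r 0) <->
  (forall j k, j != k -> gram M j k = 0 \/ wtd j = wtd k).
Proof.
have gram_sym r k : gram M r k = gram M k r.
  by rewrite !gramE; apply: eq_bigr => a _; rewrite mulrC.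
have gram_ge0 r k : 0 <= gram M r k.
  by rewrite gramE sumr_ge0 // => a _; rewrite mulr_ge0.
rewrite -(@laplacian_eq0P F m (gram M) wtd gram_sym gram_ge0).
have normalP : (forall r, wtd r = (invmx (gram M) *m M^T *m o) r 0) <->
               gram M *m \col_k wtd k = M^T *m o.
  split=> [olsE | normal r]; last by rewrite -mulmxA -normal mulKmx ?gram_unit ?mxE.
  have -> : \col_k wtd k = invmx (gram M) *m M^T *m o.
    by apply/matrixP => r c; rewrite (ord1 c) mxE olsE.
  by rewrite -mulmxA mulKVmx ?gram_unit.
apply: (iff_trans normalP); split=> [normal r | lap0].
  by rewrite -normal_residual normal subrr.
apply/matrixP => r c; rewrite (ord1 c); apply/eqP.
by rewrite -subr_eq0 normal_residual lap0.
Qed.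

End Regression.

Arguments wtd {F n m} M o r.
Arguments ols_eq_wtdP {F n m M} o.

Section Cell.
Variables (F : realFieldType) (I : finType) (Yt Gt Xt : eqType).
Variables (Y : I -> Yt) (G : I -> Gt) (X : I -> Xt) (m : nat).
Variables (P : I -> 'I_m -> F) (y : Yt) (g : Gt) (x : Xt).

Lemma mu_wtd_cellE r :
  mu_wtd Y G X P x g y r = wtd (Pcell G X x g P) (onecell F Y G X x g y) r.
Proof.
rewrite /mu_wtd /wtd !(big_enum_val (A := mem (cell G X x g))).
by congr (_ / _); apply: eq_bigr => a _; rewrite !mxE.
Qed.

Lemma discriminatesP j k :
  (forall i r, 0 <= P i r) ->
  (forall i, i \in cell G X x g -> 0 < P i j -> P i k = 0) <->
  gram (Pcell G X x g P) j k = 0.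
Proof.
move=> P_ge0; rewrite gramE; split=> [disc | gram0 i celli Pij_gt0].
  rewrite big1 // => a _; rewrite !mxE.
  have [->|Pj_gt0] := eqVneq (P (enum_val a) j) 0; first by rewrite mul0r.
  by rewrite disc ?mulr0 ?enum_valP // lt_def Pj_gt0 P_ge0.
have prod_ge0 a : 0 <= Pcell G X x g P a j * Pcell G X x g P a k.
  by rewrite !mxE mulr_ge0.
have := psumr_eq0P (fun a _ => prod_ge0 a) gram0 (i := enum_rank_in celli i) isT.
rewrite !mxE (enum_rankK_in celli celli) => /eqP.
by rewrite mulf_eq0 gt_eqF //= => /eqP.
Qed.

End Cell.

Theorem theorem4 (F : realFieldType) (I : finType) (Yt Gt Xt : eqType)
  (Y : I -> Yt) (G : I -> Gt) (X : I -> Xt) (m : nat) (P : I -> 'I_m -> F)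
  (hP0 : forall i r, 0 <= P i r)
  (hP1 : forall i, \sum_(r < m) P i r = 1)
  (y : Yt) (g : Gt) (x : Xt)
  (hrank : \rank (Pcell G X x g P) = m) :
  (forall r : 'I_m, mu_wtd Y G X P x g y r = mu_ols Y G X P x g y r ord0)
  <->
  (forall j k : 'I_m, j != k ->
     (forall i, i \in cell G X x g -> 0 < P i j -> P i k = 0)
     \/ mu_wtd Y G X P x g y j = mu_wtd Y G X P x g y k).
Proof.
set M := Pcell G X x g P; set o := onecell F Y G X x g y.
have M_ge0 a r : 0 <= M a r by rewrite mxE.
have M_rows1 a : \sum_r M a r = 1.
  by rewrite -(hP1 (enum_val a)); apply: eq_bigr => r _; rewrite mxE.
have olsP := ols_eq_wtdP o M_ge0 M_rows1 hrank.
rewrite /mu_ols -/M -/o.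
split=> [olsE j k jk | disc r].
  rewrite !mu_wtd_cellE discriminatesP //; apply: (proj1 olsP) jk => r.
  by rewrite -mu_wtd_cellE olsE.
rewrite mu_wtd_cellE; move: r; apply/olsP => j k jk.
by rewrite -discriminatesP // -!mu_wtd_cellE; apply: disc.
Qed.
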